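(* Let $p$ be a prime and let $A$ be a nontrivial finite $p$-group. Then for every integer $k$, $$r_{A\wr \mathbb{Z}/p\mathbb{Z},\,k}=(1-p^{-1})\,r_{A,k}+\frac{r_{A,k-1}^{\,p}}{p}.$$
   Context: For a finite $p$-group $G$ with $|G|=p^g$ and maximum element order $p^{f}$, and for $k\in\mathbb{Z}$, define $r_{G,k}=\frac{1}{p^g}\cdot\#\{x\in G:\ \mathrm{order}(x)\le p^{f-k}\}$. For groups $A,B$, let $K=\prod_{b\in B}A$, on which $B$ acts by $x\cdot(\alpha_b)_b=(\alpha_{x^{-1}b})_b$ for $x\in B$; the wreath product $A\wr B$ is the semidirect product $K\rtimes B$ for this action. *)

From HB Require Import structures.
From mathcomp Require Import all_boot all_order all_algebra all_fingroup all_solvable.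
Set Implicit Arguments. Unset Strict Implicit. Unset Printing Implicit Defensive.
Import GRing.Theory Num.Theory.

(* Wreath product A \wr B = K \rtimes B, K = prod_{b in B} A,             *)
Section Wreath.
Variables aT bT : finGroupType.
Local Open Scope group_scope.

Notation K := {dffun forall _ : bT, aT}.

Definition wr_act (x : bT) (al : K) : K := [ffun b => al (x^-1 * b)].

Definition wreath : predArgType := (K * bT)%type.
HB.instance Definition _ := Finite.on wreath.

Definition wr_mul (u v : wreath) : wreath := (u.1 * wr_act u.2 v.1, u.2 * v.2).
Definition wr_one : wreath := (1, 1).
Definition wr_inv (u : wreath) : wreath := (wr_act u.2^-1 u.1^-1, u.2^-1).

Lemma wr_act1 al : wr_act 1 al = al.
Proof. by apply/ffunP => b; rewrite ffunE invg1 mul1g. Qed.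

Lemma wr_actM x y al : wr_act x (wr_act y al) = wr_act (x * y) al.
Proof. by apply/ffunP => b; rewrite !ffunE invMg mulgA. Qed.

Lemma wr_act_mul x al be : wr_act x (al * be) = wr_act x al * wr_act x be.
Proof. by apply/ffunP => b; rewrite !ffunE. Qed.

Lemma wr_act_one x : wr_act x 1 = 1.
Proof. by apply/ffunP => b; rewrite !ffunE. Qed.

Lemma wr_act_inv x al : wr_act x al^-1 = (wr_act x al)^-1.
Proof. by apply/ffunP => b; rewrite !ffunE. Qed.

Lemma wr_mul1g : left_id wr_one wr_mul.
Proof. by case=> al x; rewrite /wr_mul /= wr_act1 !mul1g. Qed.

Lemma wr_mulVg : left_inverse wr_one wr_inv wr_mul.
Proof.
case=> al x; rewrite /wr_mul /wr_inv /wr_one /=.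
by rewrite -wr_act_mul !mulVg wr_act_one.
Qed.

Lemma wr_mulgA : associative wr_mul.
Proof.
case=> a x [b y] [c z]; rewrite /wr_mul /=.
by rewrite wr_act_mul wr_actM !mulgA.
Qed.

HB.instance Definition _ := Finite_isGroup.Build wreath wr_mulgA wr_mul1g wr_mulVg.

End Wreath.

Local Open Scope ring_scope.

Definition max_elt_order (gT : finGroupType) : nat := (\max_(x : gT) #[x]%g)%N.

Definition r_ratio (p : nat) (gT : finGroupType) (k : int) : rat :=
  let g := logn p #|gT| in
  let f := logn p (max_elt_order gT) in
  (#|[set x : gT | (#[x]%g)%:R <= (p%:R : rat) ^ (f%:Z - k)]|)%:R / (p ^ g)%:R.

From HB Require Import structures.
From mathcomp Require Import all_boot all_order all_algebra all_fingroup all_solvable.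
From mathcomp Require Import ring.

Set Implicit Arguments.
Unset Strict Implicit.
Unset Printing Implicit Defensive.

Import Order.TTheory GRing.Theory Num.Theory.

(* Write u = (al, x) in A wr Z_p. As x ^+ p = 1, u ^+ p = (P, 1) with
   P b = al b * al (x^-1 b) * ... * al (x^-(p-1) b), and since u commutes with
   u ^+ p the coordinates of P are conjugate to one another. Hence, for x != 1,
   u ^+ (p * m) = 1 iff pi ^+ m = 1, where pi = P 1 is the product of al along
   the orbit of 1, and #[u] = p * #[pi]. Multiplying the coordinate of al at 1
   shows that pi takes every value of A exactly |A|^(p-1) times. Counting then
   gives N_W(p m) = N_A(p m)^p + (p-1) |A|^(p-1) N_A(m) for the number N_G(n)
   of solutions of x ^+ n = 1; moreover exp W = p * exp A, so the maximal
   element order gains one factor p, and dividing by |W| = p |A|^p yields the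
   formula. *)

Definition nroots1 (G : finGroupType) (n : nat) : nat :=
  #|[set x : G | (x ^+ n == 1)%g]|.

Lemma nroots1_1 (G : finGroupType) : nroots1 G 1 = 1%N.
Proof.
by rewrite -[RHS](cards1 (1%g : G)); apply: eq_card => x; rewrite !inE expg1.
Qed.

Lemma max_elt_order_exponent (G : finGroupType) :
  nilpotent [set: G] -> max_elt_order G = exponent [set: G].
Proof.
move=> nilG; have [x _ ex] := exponent_witness nilG.
apply/eqP; rewrite /max_elt_order eqn_leq ex leq_bigmax andbT -ex.
by apply/bigmax_leqP => y _; rewrite dvdn_leq ?exponent_gt0 ?dvdn_exponent ?inE.
Qed.

Local Notation n_order_le G p e :=
  #|[set x : G | ((#[x]%g)%:R <= (p%:R : rat) ^ e)%R]|.

Section PGroupCounts.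
Variables (p : nat) (G : finGroupType).
Hypotheses (p_pr : prime p) (pG : (p.-group [set: G])%g).

Lemma pexp_logn_card : (p ^ logn p #|G|)%N = #|G|.
Proof. by rewrite -cardsT -card_pgroup. Qed.

Lemma order_le_pexp (x : G) t : (#[x]%g <= p ^ t) = (x ^+ (p ^ t) == 1)%g.
Proof.
rewrite -order_dvdn; have [a ->] := p_natP (mem_p_elt pG (in_setT x)).
by rewrite dvdn_Pexp2l ?leq_exp2l ?prime_gt1.
Qed.

Local Open Scope ring_scope.

Lemma n_order_leE (e : int) :
  n_order_le G p e = if e is Posz t then nroots1 G (p ^ t) else 0%N.
Proof.
case: e => [t|n].
  by apply: eq_card => x; rewrite !inE -exprnP -natrX ler_nat order_le_pexp.
apply: eq_card0 => x; rewrite !inE -[_ ^ Negz n]/((p%:R ^+ n.+1)^-1); apply/negbTE.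
rewrite -ltNge (lt_le_trans _ (_ : 1 <= _)) ?ler1n ?order_gt0 //.
by rewrite invf_lt1 ?exprn_gt0 ?exprn_egt1 ?ltr0n ?ltr1n ?prime_gt0 ?prime_gt1.
Qed.

End PGroupCounts.

Lemma card_preimset_const_fibres (T U : finType) (f : T -> U) (S : {set U}) c :
  (forall u, #|[set t | f t == u]| = c) -> #|[set t | f t \in S]| = (#|S| * c)%N.
Proof.
move=> fibre_c; rewrite -sum1_card (partition_big f (mem S)) => [|t]; last first.
  by rewrite inE.
rewrite -sum_nat_const; apply: eq_bigr => u Su; rewrite -(fibre_c u) -sum1_card.
by apply: eq_bigl => t; rewrite !inE andb_idl // => /eqP ->.
Qed.

Lemma card_set_pair (T U : finType) (Q : pred (T * U)) :
  #|[set u | Q u]| = \sum_(y : U) #|[set t | Q (t, y)]|.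
Proof.
rewrite -sum1_card (partition_big snd xpredT) //=; apply: eq_bigr => y _.
rewrite -sum1_card (reindex_onto (fun t => (t, y)) fst) //; last first.
  by move=> [t y'] /andP[_ /eqP/= ->].
by apply: eq_bigl => t; rewrite !inE /= !eqxx !andbT.
Qed.

Section ZpPrime.
Variables (p : nat) (p_pr : prime p).
Local Notation Z := 'Z_p.
Local Open Scope group_scope.

Lemma card_Zp_prime : #|Z| = p.
Proof. by rewrite card_ord Zp_cast // prime_gt1. Qed.

Lemma expg_Zp_prime (x : Z) : x ^+ p = 1.
Proof. by have := expg_cardG (in_setT x); rewrite cardsT card_Zp_prime. Qed.

Lemma cycle_Zp_prime (x : Z) : x != 1 -> <[x]> = [set: Z].
Proof.
by move=> ntx; apply/esym/nt_gen_prime; rewrite ?cardsT ?card_Zp_prime // !inE ntx.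
Qed.

Lemma order_Zp_prime (x : Z) : x != 1 -> #[x] = p.
Proof. by move=> ntx; rewrite /order cycle_Zp_prime // cardsT card_Zp_prime. Qed.

End ZpPrime.

Section WreathCyclicPrime.
Variables (A : finGroupType) (p : nat).
Hypothesis p_pr : prime p.
Local Notation Z := 'Z_p.
Local Notation K := {dffun forall _ : Z, A}.
Local Notation W := (wreath A Z).
Local Notation delta1 y := (@dfung1 Z (fun=> A) 1%g y).
Local Open Scope group_scope.

Definition twisted_pow (al : K) (x : Z) (n : nat) : K :=
  [ffun b => \prod_(0 <= i < n) al (x ^- i * b)].

Definition orbit_prod (al : K) (x : Z) : A := \prod_(0 <= i < p) al (x ^- i).

Lemma expg_wreath (al : K) x n : ((al, x) : W) ^+ n = (twisted_pow al x n, x ^+ n).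
Proof.
elim: n => [|n IHn].
  by rewrite expg0; congr (_, _); apply/ffunP => b; rewrite !ffunE big_geq.
rewrite expgS IHn; congr (_, _); last by rewrite expgS.
apply/ffunP => b; rewrite !ffunE big_nat_recl //= expg0 invg1 mul1g; congr (_ * _).
by apply: eq_bigr => i _; rewrite expgS invMg mulgA.
Qed.

Lemma expg_wreath1_eq1 (al : K) n :
  (((al, 1) : W) ^+ n == 1) = [forall b, al b ^+ n == 1].
Proof.
rewrite expg_wreath expg1n xpair_eqE eqxx andbT.
have coord b : twisted_pow al 1 n b = al b ^+ n.
  rewrite ffunE (eq_bigr (fun=> al b)) ?prodg_const_nat ?subn0 // => i _.
  by rewrite expg1n invg1 mul1g.
apply/eqP/forallP => [tp1 b | al_n]; first by rewrite -coord tp1 ffunE.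
by apply/ffunP => b; rewrite coord ffunE; apply/eqP.
Qed.

Lemma twisted_pow_p1 al x : twisted_pow al x p 1 = orbit_prod al x.
Proof. by rewrite ffunE; apply: eq_bigr => i _; rewrite mulg1. Qed.

Lemma expg_wreath_p (al : K) x : ((al, x) : W) ^+ p = (twisted_pow al x p, 1).
Proof. by rewrite expg_wreath (expg_Zp_prime p_pr). Qed.

Lemma twisted_pow_conj (al : K) x b :
  twisted_pow al x p (x^-1 * b) = twisted_pow al x p b ^ al b.
Proof.
have /(congr1 (fun u : W => u.1 b)) := commuteX p (commute_refl ((al, x) : W)).
by rewrite /commute expg_wreath_p /= !ffunE invg1 mul1g /conjg => <-; rewrite mulKg.
Qed.

Lemma order_twisted_pow (al : K) x b :
  x != 1 -> #[twisted_pow al x p b] = #[orbit_prod al x].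
Proof.
move=> ntx; have: b \in <[x^-1]> by rewrite (cycle_Zp_prime p_pr) ?inE ?invg_eq1.
case/cycleP=> i ->; rewrite -twisted_pow_p1.
elim: i => [|i IHi]; first by rewrite expg0.
by rewrite expgS twisted_pow_conj orderJ.
Qed.

Lemma expg_wreath_pmul_eq1 (al : K) x m :
  x != 1 -> (((al, x) : W) ^+ (p * m) == 1) = (orbit_prod al x ^+ m == 1).
Proof.
move=> ntx; rewrite expgM expg_wreath_p expg_wreath1_eq1.
apply/forallP/idP => [/(_ 1) | op_m b]; first by rewrite twisted_pow_p1.
by rewrite -order_dvdn order_twisted_pow // order_dvdn.
Qed.

Lemma order_wreath (al : K) x : x != 1 -> #[(al, x) : W] = (p * #[orbit_prod al x])%N.
Proof.
move=> ntx; set u : W := (al, x).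
have p_dvd_u : p %| #[u].
  have /(congr1 snd) := expg_order u.
  by rewrite expg_wreath /= => /eqP; rewrite -order_dvdn (order_Zp_prime p_pr).
apply/eqP; rewrite eqn_dvd order_dvdn expg_wreath_pmul_eq1 // expg_order eqxx /=.
rewrite -(divnK p_dvd_u) [(_ %/ p * p)%N]mulnC dvdn_pmul2l ?prime_gt0 //.
by rewrite order_dvdn -expg_wreath_pmul_eq1 // mulnC divnK // expg_order.
Qed.

Lemma orbit_prod_translate (y : A) (al : K) x :
  x != 1 -> orbit_prod (delta1 y * al) x = y * orbit_prod al x.
Proof.
move=> ntx; rewrite /orbit_prod !(big_ltn (prime_gt0 p_pr)) expg0 invg1.
rewrite mulg_ffun dfung1_id -mulgA.
congr (_ * (_ * _)); apply: eq_big_nat => i /andP[i_gt0 i_lt_p].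
rewrite mulg_ffun dfung1_dflt ?mul1g // eq_sym invg_eq1 -order_dvdn.
by rewrite (order_Zp_prime p_pr) // gtnNdvd.
Qed.

Lemma card_orbit_prod_fibre x z : x != 1 ->
  #|[set al : K | orbit_prod al x == z]| = #|[set al : K | orbit_prod al x == 1]|.
Proof.
move=> ntx; have fibre_le z1 z2 :
    #|[set al : K | orbit_prod al x == z1]| <= #|[set al : K | orbit_prod al x == z2]|.
  rewrite -(card_imset _ (mulgI (delta1 (z2 * z1^-1)))); apply: subset_leq_card.
  apply/subsetP => _ /imsetP[al /[!inE] /eqP al_z1 ->].
  by rewrite orbit_prod_translate // al_z1 mulgKV.
by apply/eqP; rewrite eqn_leq !fibre_le.
Qed.

Lemma card_orbit_prod_in x (S : {set A}) : x != 1 ->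
  #|[set al : K | orbit_prod al x \in S]| = (#|S| * #|A| ^ p.-1)%N.
Proof.
move=> ntx; have /card_preimset_const_fibres card_pre :=
  fun z : A => card_orbit_prod_fibre z ntx.
rewrite card_pre; congr (_ * _)%N; apply/eqP.
have := card_pre [set: A]; rewrite cardsT (eq_card (B := K)) => [|al]; last first.
  by rewrite !inE.
have expS_pred : (#|A| ^ p = #|A| * #|A| ^ p.-1)%N by rewrite -expnS prednK ?prime_gt0.
rewrite card_ffun (card_Zp_prime p_pr) expS_pred => /eqP.
by rewrite eqn_pmul2l 1?eq_sym // -cardsT cardG_gt0.
Qed.

Lemma nroots1_wreath m :
  nroots1 W (p * m) = (nroots1 A (p * m) ^ p + p.-1 * (#|A| ^ p.-1 * nroots1 A m))%N.
Proof.
rewrite /nroots1 card_set_pair (bigD1 1) //=; congr (_ + _)%N.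
  rewrite (eq_card (B := ffun_on [set a : A | a ^+ (p * m) == 1])).
    by rewrite card_ffun_on (card_Zp_prime p_pr).
  move=> al; rewrite !inE expg_wreath1_eq1.
  by apply/forallP/ffun_onP => al_pm b; have := al_pm b; rewrite inE.
rewrite (eq_bigr (fun=> #|A| ^ p.-1 * nroots1 A m)%N) => [|x ntx].
  by rewrite sum_nat_const cardC1 (card_Zp_prime p_pr).
rewrite (eq_card (B := [set al : K | orbit_prod al x \in [set a : A | a ^+ m == 1]])).
  by rewrite card_orbit_prod_in // mulnC.
by move=> al; rewrite !inE expg_wreath_pmul_eq1.
Qed.

Lemma exponent_wreath :
  nilpotent [set: A] -> exponent [set: W] = (p * exponent [set: A])%N.
Proof.
move=> nilA; apply/eqP; rewrite eqn_dvd; apply/andP; split.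
  apply/exponentP => -[al x] _; apply/eqP.
  rewrite expgM expg_wreath_p expg_wreath1_eq1; apply/forallP => b.
  by rewrite expg_exponent ?inE.
have [a _ ->] := exponent_witness nilA.
have [x ntx] : exists x : Z, x != 1 by exists ord_max.
have op1 : orbit_prod 1 x = 1 by apply: big1 => i _; rewrite oneg_ffun.
have := dvdn_exponent (in_setT ((delta1 a, x) : W)).
by rewrite order_wreath // -[delta1 a]mulg1 orbit_prod_translate // op1 mulg1.
Qed.

End WreathCyclicPrime.

Local Open Scope ring_scope.

Lemma wreath_ratio_identity (p n N0 N1 : nat) : (0 < p)%N -> (0 < n)%N ->
  ((N1 ^ p + p.-1 * (n ^ p.-1 * N0))%N%:R / (n ^ p * p)%N%:R : rat) =
  (1 - p%:R^-1) * (N0%:R / n%:R) + (N1%:R / n%:R) ^+ p / p%:R.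
Proof.
case: p => // q _ n_gt0.
rewrite /= natrD !natrM !natrX exprMn exprVn !exprS -[q.+1%:R]natr1.
have n_neq0 : (n%:R : rat) != 0 by rewrite pnatr_eq0 -lt0n.
by field; rewrite n_neq0 expf_neq0 // natr1 pnatr_eq0.
Qed.

Section WreathPGroup.
Variables (A : finGroupType) (p : nat).
Hypotheses (p_pr : prime p) (pA : (p.-group [set: A])%g).
Local Notation W := (wreath A 'Z_p).

Lemma card_wreath : #|W| = (#|A| ^ p * p)%N.
Proof. by rewrite card_prod card_ffun (card_Zp_prime p_pr). Qed.

Lemma pgroup_wreath : (p.-group [set: W])%g.
Proof.
by move: pA; rewrite /pgroup !cardsT card_wreath pnatM pnatX pnat_id // => ->.
Qed.

Lemma logn_max_elt_order_wreath :
  logn p (max_elt_order W) = (logn p (max_elt_order A)).+1.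
Proof.
have nilA := pgroup_nil pA; have nilW := pgroup_nil pgroup_wreath.
rewrite !max_elt_order_exponent // exponent_wreath //.
by rewrite lognM ?exponent_gt0 ?prime_gt0 // logn_prime // eqxx.
Qed.

Lemma n_order_le_wreath (e : int) :
  n_order_le W p (e + 1) =
  (n_order_le A p (e + 1) ^ p + p.-1 * (#|A| ^ p.-1 * n_order_le A p e))%N.
Proof.
rewrite (n_order_leE p_pr pgroup_wreath) !(n_order_leE p_pr pA).
case: e => [t|[|n]] /=.
- by rewrite addn1 expnS nroots1_wreath.
- by rewrite subnn expn0 !nroots1_1 !muln0 addn0 exp1n.
- by rewrite !muln0 addn0 exp0n ?prime_gt0.
Qed.

End WreathPGroup.

Theorem corollary5p1 (p : nat) (A : finGroupType) (k : int) :
  prime p -> (p.-group [set: A])%g -> (1 < #|A|)%N ->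
  r_ratio p (wreath A 'Z_p) k =
    (1 - (p%:R : rat)^-1) * r_ratio p A k + (r_ratio p A (k - 1)) ^+ p / p%:R.
Proof.
move=> p_pr pA _; have pW := pgroup_wreath p_pr pA.
rewrite /r_ratio /= logn_max_elt_order_wreath // !pexp_logn_card // card_wreath //.
set f := logn p (max_elt_order A).
have -> : f.+1%:Z - k = f%:Z - k + 1 by rewrite -addn1 PoszD addrAC.
have -> : f%:Z - (k - 1) = f%:Z - k + 1 by rewrite opprB addrCA addrC.
rewrite n_order_le_wreath //.
by apply: wreath_ratio_identity; [exact: prime_gt0 | rewrite -cardsT cardG_gt0].
Qed.
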